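(* Let $(W,S)$ be a Coxeter system with length function $\ell$ and Bruhat order $\le$. Let $x,y\in W$ and $s,t\in S$ be such that $y=sxt$ and $\ell(x)=\ell(y)$. If $x'\in W$ satisfies $x'\le x$, then either $x'\le y$, or $sx't\le y$ with $\ell(sx't)\le \ell(x')$.
   Context: Standard notions: Coxeter system, length function, Bruhat order. *)

From Stdlib Require Import List Relations ClassicalEpsilon.
Import ListNotations.

Record Group := {
  carrier :> Type;
  gmul : carrier -> carrier -> carrier;
  gone : carrier;
  ginv : carrier -> carrier;
  gmul_assoc : forall a b c, gmul a (gmul b c) = gmul (gmul a b) c;
  gmul_1l : forall a, gmul gone a = a;
  gmul_1r : forall a, gmul a gone = a;
  gmul_Vl : forall a, gmul (ginv a) a = gone;
  gmul_Vr : forall a, gmul a (ginv a) = gone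
}.

Arguments gmul {g} _ _.
Arguments gone {g}.
Arguments ginv {g} _.

Fixpoint gpow {G : Group} (g : G) (n : nat) : G :=
  match n with 0 => gone | S k => gmul g (gpow g k) end.

Fixpoint wprod {G : Group} (l : list G) : G :=
  match l with [] => gone | a :: l' => gmul a (wprod l') end.

(* (W,S) is a Coxeter system: S consists of involutions, S generates W, and
   W has the presentation < S | (s t)^{m(s,t)} = 1 > where m(s,t) is the order
   of s t in W (possibly infinite, i.e. no relation).  The presentation is
   expressed by the universal property: every map f from S into a group G
   respecting all relations (s t)^n = 1 valid in W extends to a homomorphism
   W -> G. *)
Definition coxeter_system (W : Group) (S : W -> Prop) : Prop :=
  (forall s, S s -> s <> gone /\ gmul s s = gone) /\
  (forall w : W, exists l : list W, Forall S l /\ wprod l = w) /\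
  (forall (G : Group) (f : W -> G),
     (forall s t n, S s -> S t -> gpow (gmul s t) n = gone ->
                    gpow (gmul (f s) (f t)) n = gone) ->
     exists phi : W -> G,
       (forall a b, phi (gmul a b) = gmul (phi a) (phi b)) /\
       (forall s, S s -> phi s = f s)).

Definition has_word (W : Group) (S : W -> Prop) (w : W) (n : nat) : Prop :=
  exists l : list W, Forall S l /\ wprod l = w /\ length l = n.

Definition coxlen (W : Group) (S : W -> Prop) (w : W) : nat :=
  epsilon (inhabits 0)
    (fun n => has_word W S w n /\ forall m, has_word W S w m -> n <= m).

Definition reflection (W : Group) (S : W -> Prop) (r : W) : Prop :=
  exists w s, S s /\ r = gmul (gmul w s) (ginv w).

Definition bruhat_step (W : Group) (S : W -> Prop) (u v : W) : Prop :=
  exists r, reflection W S r /\ v = gmul u r /\ coxlen W S u < coxlen W S v.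

Definition bruhat (W : Group) (S : W -> Prop) : relation W :=
  clos_refl_trans W (bruhat_step W S).

From Stdlib Require Import List Relations ClassicalEpsilon Classical Lia Arith
  FunctionalExtensionality Bool.
Import ListNotations.

(* The lemma then follows by cases: if s is a left descent of x, lift
   x' <= x along s; if t is a right descent, invert; otherwise x <= y. *)

Infix "**" := gmul (at level 40, left associativity).

Section GroupFacts.
Variable G : Group.
Implicit Types a b c u v : G.

Lemma mul_cancel_l a b c : a ** b = a ** c -> b = c.
Proof.
  intro H. rewrite <- (gmul_1l G b), <- (gmul_1l G c), <- (gmul_Vl G a),
    <- !gmul_assoc, H. reflexivity.
Qed.

Lemma inv_uniq a b : a ** b = gone -> ginv a = b.
Proof. intro H. apply (mul_cancel_l a). rewrite gmul_Vr. auto. Qed.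

Lemma inv_inv a : ginv (ginv a) = a.
Proof. apply inv_uniq, gmul_Vl. Qed.

Lemma inv_mul a b : ginv (a ** b) = ginv b ** ginv a.
Proof.
  apply inv_uniq. rewrite gmul_assoc, <- (gmul_assoc G a b), gmul_Vr, gmul_1r, gmul_Vr.
  reflexivity.
Qed.

Lemma inv_one : ginv (@gone G) = gone.
Proof. apply inv_uniq, gmul_1l. Qed.

Lemma mulVK a b : b ** ginv a ** a = b.
Proof. rewrite <- gmul_assoc, gmul_Vl, gmul_1r. reflexivity. Qed.

Lemma invol_inv a : a ** a = gone -> ginv a = a.
Proof. apply inv_uniq. Qed.

Lemma invol_mulK a b : a ** a = gone -> a ** (a ** b) = b.
Proof. intro H. rewrite gmul_assoc, H, gmul_1l. reflexivity. Qed.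

Lemma invol_mulKr a b : a ** a = gone -> b ** a ** a = b.
Proof. intro H. rewrite <- gmul_assoc, H, gmul_1r. reflexivity. Qed.

Lemma conj_mul a b u :
  ginv b ** (ginv a ** u ** a) ** b = ginv (a ** b) ** u ** (a ** b).
Proof. rewrite inv_mul, !gmul_assoc. reflexivity. Qed.

Lemma conj_iff c u v : ginv c ** u ** c = v <-> u = c ** v ** ginv c.
Proof.
  split; intro H; subst.
  - rewrite !gmul_assoc, gmul_Vr, gmul_1l, <- gmul_assoc, gmul_Vr, gmul_1r. reflexivity.
  - rewrite !gmul_assoc, gmul_Vl, gmul_1l, mulVK. reflexivity.
Qed.

Lemma wprod_app (l1 l2 : list G) : wprod (l1 ++ l2) = wprod l1 ** wprod l2.
Proof.
  induction l1 as [|a l1 IH]; simpl; [rewrite gmul_1l | rewrite IH, gmul_assoc]; reflexivity.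
Qed.

Lemma gpow_S_r a n : gpow a (S n) = gpow a n ** a.
Proof.
  induction n as [|n IH]; simpl; [rewrite gmul_1l, gmul_1r; reflexivity|].
  simpl in IH. rewrite IH at 1. apply gmul_assoc.
Qed.

Lemma gpow_add a m n : gpow a (m + n) = gpow a m ** gpow a n.
Proof.
  induction m as [|m IH]; simpl; [rewrite gmul_1l | rewrite IH, gmul_assoc]; reflexivity.
Qed.

Lemma gpow_inv a n : gpow (ginv a) n = ginv (gpow a n).
Proof.
  induction n as [|n IH]; simpl; [rewrite inv_one; reflexivity|].
  rewrite IH, <- inv_mul, <- gpow_S_r. reflexivity.
Qed.

End GroupFacts.

Lemma hom_one (G H : Group) (phi : G -> H) :
  (forall a b, phi (a ** b) = phi a ** phi b) -> phi gone = gone.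
Proof.
  intro Hm. apply (mul_cancel_l H (phi gone)). rewrite <- Hm, gmul_1l, gmul_1r. reflexivity.
Qed.

Lemma least_nat (P : nat -> Prop) n : P n -> exists k, P k /\ forall m, P m -> k <= m.
Proof.
  induction n as [n IH] using lt_wf_ind. intro Hn.
  destruct (classic (exists m, m < n /\ P m)) as [[m [Hm Pm]]|Hno].
  - exact (IH m Hm Pm).
  - exists n. split; [exact Hn|]. intros m Pm.
    destruct (le_lt_dec n m); [assumption|]. exfalso. eauto.
Qed.

Definition BoolG : Group.
Proof.
  refine {| carrier := bool; gmul := xorb; gone := false; ginv := fun b => b |}.
  - intros; rewrite xorb_assoc; reflexivity.
  - exact xorb_false_l.
  - exact xorb_false_r.
  - exact xorb_nilpotent.
  - exact xorb_nilpotent.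
Defined.

Section Length.
Variables (W : Group) (S : W -> Prop).
Hypothesis HW : coxeter_system W S.
Local Notation len := (coxlen W S).

Lemma gen_invol s : S s -> s ** s = gone.
Proof. intro Hs. exact (proj2 (proj1 HW s Hs)). Qed.

Lemma gen_inv s : S s -> ginv s = s.
Proof. intro Hs. apply invol_inv, gen_invol, Hs. Qed.

Lemma coxlen_spec w :
  has_word W S w (len w) /\ forall m, has_word W S w m -> len w <= m.
Proof.
  unfold coxlen. apply epsilon_spec.
  destruct (proj1 (proj2 HW) w) as [l [Hl Hw]].
  apply (least_nat _ (length l)). exists l. auto.
Qed.

Lemma len_wprod_le l : Forall S l -> len (wprod l) <= length l.
Proof. intro Hl. apply (proj2 (coxlen_spec _)). exists l. auto. Qed.

Lemma reduced_word w : exists l, Forall S l /\ wprod l = w /\ length l = len w.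
Proof. exact (proj1 (coxlen_spec w)). Qed.

Lemma len_gen s : S s -> len s = 1.
Proof.
  intro Hs. assert (Hle : len (wprod [s]) <= 1) by (apply len_wprod_le; auto).
  simpl in Hle. rewrite gmul_1r in Hle.
  destruct (reduced_word s) as [[|a l] [_ [Hp Hn]]]; simpl in *; [|lia].
  exfalso. apply (proj1 (proj1 HW s Hs)). auto.
Qed.

Lemma len_mul_gen_r s w : S s -> len (w ** s) <= 1 + len w.
Proof.
  intro Hs. destruct (reduced_word w) as [l [Hl [Hw Hn]]].
  replace (w ** s) with (wprod (l ++ [s]))
    by (rewrite wprod_app; simpl; rewrite gmul_1r, Hw; reflexivity).
  rewrite <- Hn. replace (1 + length l) with (length (l ++ [s]))
    by (rewrite length_app; simpl; lia).
  apply len_wprod_le, Forall_app. auto.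
Qed.

Lemma wprod_rev l : Forall S l -> wprod (rev l) = ginv (wprod l).
Proof.
  induction 1 as [|a l Ha _ IH]; simpl; [rewrite inv_one; reflexivity|].
  rewrite wprod_app, IH, inv_mul, (gen_inv a Ha). simpl. rewrite gmul_1r. reflexivity.
Qed.

Lemma len_inv_le w : len (ginv w) <= len w.
Proof.
  destruct (reduced_word w) as [l [Hl [Hw Hn]]].
  rewrite <- Hn, <- Hw, <- wprod_rev, <- length_rev by exact Hl.
  apply len_wprod_le, Forall_rev, Hl.
Qed.

Lemma len_inv w : len (ginv w) = len w.
Proof.
  apply Nat.le_antisymm; [apply len_inv_le|].
  rewrite <- (inv_inv W w) at 1. apply len_inv_le.
Qed.

End Length.

(* The sign character: since all defining relations (s t)^n = 1 of W have
   even length, [s |-> true] extends to a homomorphism W -> Z/2, which is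
   forced to be the parity of the length. *)
Section Parity.
Variables (W : Group) (S : W -> Prop).
Hypothesis HW : coxeter_system W S.
Local Notation len := (coxlen W S).

Lemma sign_character :
  exists eps : W -> bool, (forall a b, eps (a ** b) = xorb (eps a) (eps b)) /\
    (forall s, S s -> eps s = true).
Proof.
  destruct (proj2 (proj2 HW) BoolG (fun _ => true)) as [eps [Hm Hs]].
  - intros s t n _ _ _. simpl. induction n; simpl; auto.
  - exists eps. auto.
Qed.

Lemma odd_len_mul a b : Nat.odd (len (a ** b)) = xorb (Nat.odd (len a)) (Nat.odd (len b)).
Proof.
  destruct sign_character as [eps [Hm Hs]].
  assert (Hword : forall l, Forall S l -> eps (wprod l) = Nat.odd (length l)).
  { induction 1 as [|c l Hc _ IH]; simpl.
    - exact (hom_one W BoolG eps Hm).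
    - rewrite Hm, IH, Hs, Nat.odd_succ, <- Nat.negb_odd by exact Hc. reflexivity. }
  assert (Hlen : forall w, eps w = Nat.odd (len w)).
  { intro w. destruct (reduced_word W S HW w) as [l [Hl [<- <-]]]. auto. }
  rewrite <- !Hlen. apply Hm.
Qed.

Lemma gen_reflection s : S s -> reflection W S s.
Proof. intro Hs. exists gone, s. rewrite inv_one, gmul_1l, gmul_1r. auto. Qed.

Lemma reflection_conj r w : reflection W S r -> reflection W S (w ** r ** ginv w).
Proof.
  intros [v [s [Hs ->]]]. exists (w ** v), s. rewrite inv_mul, !gmul_assoc. auto.
Qed.

Lemma reflection_invol r : reflection W S r -> r ** r = gone.
Proof.
  intros [v [s [Hs ->]]].
  rewrite <- !gmul_assoc, (gmul_assoc _ (ginv v) v), gmul_Vl, gmul_1l,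
    (gmul_assoc _ s s), (gen_invol W S HW s Hs), gmul_1l, gmul_Vr.
  reflexivity.
Qed.

Lemma reflection_odd r : reflection W S r -> Nat.odd (len r) = true.
Proof.
  intros [w [s [Hs ->]]].
  rewrite !odd_len_mul, (len_inv W S HW), (len_gen W S HW s Hs).
  destruct (Nat.odd (len w)); reflexivity.
Qed.

Lemma len_mul_refl_r r u : reflection W S r -> len (u ** r) <> len u.
Proof.
  intros Hr E. pose proof (odd_len_mul u r) as P.
  rewrite E, (reflection_odd r Hr) in P. destruct (Nat.odd (len u)); discriminate.
Qed.

Lemma len_mul_refl_l r u : reflection W S r -> len (r ** u) <> len u.
Proof.
  intros Hr E. pose proof (odd_len_mul r u) as P.
  rewrite E, (reflection_odd r Hr) in P. destruct (Nat.odd (len u)); discriminate.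
Qed.

End Parity.

Definition is_eq {A : Type} (a b : A) : bool :=
  if excluded_middle_informative (a = b) then true else false.

Lemma is_eq_true {A : Type} (a b : A) : is_eq a b = true <-> a = b.
Proof.
  unfold is_eq. destruct (excluded_middle_informative (a = b)); split; congruence.
Qed.

Lemma is_eq_iff {A B : Type} (a b : A) (c d : B) :
  (a = b <-> c = d) -> is_eq a b = is_eq c d.
Proof.
  intro H. unfold is_eq.
  destruct (excluded_middle_informative (a = b)), (excluded_middle_informative (c = d));
    tauto.
Qed.

Fixpoint xor_sum (P : nat -> bool) (n : nat) : bool :=
  match n with 0 => false | S k => xorb (P 0) (xor_sum (fun j => P (S j)) k) end.

Lemma xor_sum_ext P Q n : (forall j, P j = Q j) -> xor_sum P n = xor_sum Q n.
Proof.
  revert P Q; induction n as [|n IH]; intros P Q H; simpl; [reflexivity|].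
  rewrite H. f_equal. apply IH. auto.
Qed.

Lemma xor_sum_add P a b :
  xor_sum P (a + b) = xorb (xor_sum P a) (xor_sum (fun j => P (a + j)) b).
Proof.
  revert P; induction a as [|a IH]; intro P; simpl; [apply xor_sum_ext; auto|].
  rewrite IH, xorb_assoc. reflexivity.
Qed.

(* The semidirect product W x| (W -> bool), where W acts on Boolean
   functions on W by conjugation of the argument:
   (a, f) (b, g) = (a b, u |-> f u xor g (a^-1 u a)). *)
Definition sd_mul (W : Group) (x y : W * (W -> bool)) : W * (W -> bool) :=
  (fst x ** fst y, fun u => xorb (snd x u) (snd y (ginv (fst x) ** u ** fst x))).

Definition SD (W : Group) : Group.
Proof.
  refine {| carrier := (W * (W -> bool))%type; gmul := sd_mul W;
            gone := (gone, fun _ => false);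
            ginv := fun x => (ginv (fst x), fun u => snd x (fst x ** u ** ginv (fst x))) |}.
  - intros [a f] [b g] [c h]. unfold sd_mul; simpl. f_equal; [apply gmul_assoc|].
    apply functional_extensionality; intro u. rewrite xorb_assoc, conj_mul. reflexivity.
  - intros [a f]. unfold sd_mul; simpl. f_equal; [apply gmul_1l|].
    apply functional_extensionality; intro u. rewrite inv_one, gmul_1l, gmul_1r. reflexivity.
  - intros [a f]. unfold sd_mul; simpl. f_equal; [apply gmul_1r|].
    apply functional_extensionality; intro u. apply xorb_false_r.
  - intros [a f]. unfold sd_mul; simpl. f_equal; [apply gmul_Vl|].
    apply functional_extensionality; intro u. rewrite inv_inv. apply xorb_nilpotent.
  - intros [a f]. unfold sd_mul; simpl. f_equal; [apply gmul_Vr|].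
    apply functional_extensionality; intro u.
    replace (a ** (ginv a ** u ** a) ** ginv a) with u; [apply xorb_nilpotent|].
    apply (proj1 (conj_iff W a u _)). reflexivity.
Defined.

Definition sd_gen (W : Group) (w : W) : SD W := (w, fun u => is_eq u w).

(* The elements [sd_gen s] satisfy the Coxeter relations of W: the function
   part of (sd_gen s sd_gen t)^k indicates the reflections s (ts)^j, j < 2k,
   counted mod 2, and for k = n they cancel in pairs j, n + j. *)
Lemma sd_gen_relation (W : Group) (s t : W) n :
  s ** s = gone -> t ** t = gone -> gpow (s ** t) n = gone ->
  gpow (sd_gen W s ** sd_gen W t) n = gone.
Proof.
  intros Hs Ht Hn.
  set (x := sd_gen W s ** sd_gen W t).
  assert (Hts : ginv (s ** t) = t ** s) by (rewrite inv_mul, !invol_inv; auto).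
  assert (Hfst : forall k, fst (gpow x k) = gpow (s ** t) k).
  { induction k as [|k IH]; simpl; [reflexivity|]. rewrite IH. reflexivity. }
  assert (Hsnd : forall k u,
    snd (gpow x k) u = xor_sum (fun j => is_eq u (s ** gpow (t ** s) j)) (k + k)).
  { induction k as [|k IH]; intro u; simpl; [reflexivity|].
    rewrite Nat.add_succ_r. simpl. rewrite IH, <- xorb_assoc. f_equal; [f_equal|].
    - rewrite gmul_1r. reflexivity.
    - apply is_eq_iff. rewrite conj_iff, invol_inv, gmul_1r, !gmul_assoc by exact Hs.
      tauto.
    - apply xor_sum_ext. intro j. apply is_eq_iff. rewrite conj_iff, Hts.
      rewrite <- !gmul_assoc, <- gpow_S_r, !gmul_assoc. simpl. rewrite !gmul_assoc.
      tauto. }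
  assert (Hn' : gpow (t ** s) n = gone) by (rewrite <- Hts, gpow_inv, Hn, inv_one; auto).
  rewrite (surjective_pairing (gpow x n)), Hfst, Hn. simpl. f_equal.
  apply functional_extensionality; intro u. rewrite Hsnd, xor_sum_add.
  erewrite (xor_sum_ext (fun j => is_eq u (s ** gpow (t ** s) (n + j)))).
  - apply xorb_nilpotent.
  - intro j. rewrite gpow_add, Hn', gmul_1l. reflexivity.
Qed.

Section StrongExchange.
Variables (W : Group) (S : W -> Prop).
Hypothesis HW : coxeter_system W S.
Local Notation len := (coxlen W S).

(* Tits' reflection cocycle: by the universal property, s |-> sd_gen s
   extends to a homomorphism W -> SD W; its first component is the identity
   and its second component is a map n with n (a b) u = n a u xor
   n b (a^-1 u a) and n s u = [u = s].  For a word of w, n w u is the parity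
   of the number of positions whose associated reflection equals u. *)
Lemma reflection_cocycle :
  exists n : W -> W -> bool,
    (forall a b u, n (a ** b) u = xorb (n a u) (n b (ginv a ** u ** a))) /\
    (forall s u, S s -> n s u = is_eq u s).
Proof.
  destruct HW as [Hinv [Hgen Huniv]].
  destruct (Huniv (SD W) (sd_gen W)) as [phi [Hm Hs]].
  { intros s t n Hs Ht Hn. apply sd_gen_relation; [apply Hinv..|]; auto. }
  assert (Hfst : forall w, fst (phi w) = w).
  { intro w. destruct (Hgen w) as [l [Hl <-]]. induction Hl as [|a l Ha _ IH]; simpl.
    - rewrite (hom_one W (SD W) phi Hm). reflexivity.
    - rewrite Hm. simpl. rewrite IH, Hs by exact Ha. reflexivity. }
  exists (fun w => snd (phi w)). split.
  - intros a b u. rewrite Hm. simpl. rewrite Hfst. reflexivity.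
  - intros s u Hs'. rewrite Hs by exact Hs'. reflexivity.
Qed.

Section CocycleConsequences.
Variable n : W -> W -> bool.
Hypothesis n_mul : forall a b u, n (a ** b) u = xorb (n a u) (n b (ginv a ** u ** a)).
Hypothesis n_gen : forall s u, S s -> n s u = is_eq u s.

Lemma n_one u : n gone u = false.
Proof.
  pose proof (n_mul gone gone u) as E.
  rewrite gmul_1l, inv_one, gmul_1l, gmul_1r, xorb_nilpotent in E. exact E.
Qed.

Lemma cocycle_deletion l u :
  Forall S l -> n (wprod l) u = true ->
  exists l1 a l2, l = l1 ++ a :: l2 /\ u ** wprod l = wprod (l1 ++ l2).
Proof.
  intro Hl. revert u. induction Hl as [|a l Ha Hl IH]; intros u Hn; simpl in *.
  - rewrite n_one in Hn. discriminate.
  - rewrite n_mul, n_gen in Hn by exact Ha.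
    destruct (is_eq u a) eqn:E.
    + apply (proj1 (is_eq_true u a)) in E. subst u. exists [], a, l. simpl.
      rewrite invol_mulK by exact (gen_invol W S HW a Ha). auto.
    + destruct (IH _ Hn) as [l1 [b [l2 [-> Hp]]]].
      exists (a :: l1), b, l2. split; [reflexivity|]. simpl. rewrite <- Hp.
      rewrite (gen_inv W S HW a Ha), !gmul_assoc, (gen_invol W S HW a Ha), gmul_1l.
      reflexivity.
Qed.

Lemma cocycle_reflection r : reflection W S r -> n r r = true.
Proof.
  intros [w [s [Hs ->]]].
  assert (Hconj : ginv w ** (w ** s ** ginv w) ** w = s).
  { rewrite !gmul_assoc, gmul_Vl, gmul_1l. apply mulVK. }
  assert (E : n (w ** ginv w) (w ** s ** ginv w) = false) by (rewrite gmul_Vr; apply n_one).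
  rewrite n_mul, Hconj in E.
  rewrite !n_mul, <- conj_mul, Hconj, gmul_Vl, gmul_1l, (n_gen s _ Hs).
  replace (is_eq s s) with true by (symmetry; apply is_eq_true; reflexivity).
  destruct (n w (w ** s ** ginv w)), (n (ginv w) s); simpl in *; congruence.
Qed.

(* If r shortens w then n w r holds: otherwise n (r w) r holds, so a
   letter could be deleted from a reduced word of r w to give w. *)
Lemma cocycle_descent r w :
  reflection W S r -> len (r ** w) < len w -> n w r = true.
Proof.
  intros Hr Hlt. destruct (n w r) eqn:E; [reflexivity|]. exfalso.
  assert (Hrr := reflection_invol W S HW r Hr).
  assert (Hrw : n (r ** w) r = true).
  { pose proof (n_mul r (r ** w) r) as F.
    rewrite invol_mulK, cocycle_reflection, invol_inv, invol_mulKr, E in F by assumption.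
    destruct (n (r ** w) r); [reflexivity | discriminate]. }
  destruct (reduced_word W S HW (r ** w)) as [l [Hl [Hp Hn]]].
  rewrite <- Hp in Hrw.
  destruct (cocycle_deletion l r Hl Hrw) as [l1 [a [l2 [-> Hq]]]].
  rewrite Hp, invol_mulK in Hq by exact Hrr.
  apply Forall_app in Hl as [Hl1 Hl2]. apply Forall_cons_iff in Hl2 as [_ Hl2'].
  pose proof (len_wprod_le W S HW (l1 ++ l2) (proj2 (Forall_app _ _ _) (conj Hl1 Hl2'))) as Hle.
  rewrite <- Hq, length_app in Hle. rewrite length_app in Hn. simpl in Hn. lia.
Qed.

End CocycleConsequences.

Lemma strong_exchange r w l :
  reflection W S r -> len (r ** w) < len w -> Forall S l -> wprod l = w ->
  exists l1 a l2, l = l1 ++ a :: l2 /\ r ** w = wprod (l1 ++ l2).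
Proof.
  intros Hr Hlt Hl Hw.
  destruct reflection_cocycle as [n [n_mul n_gen]].
  assert (Hn := cocycle_descent n n_mul n_gen r w Hr Hlt).
  rewrite <- Hw in Hn |- *. exact (cocycle_deletion n n_mul n_gen l r Hl Hn).
Qed.

End StrongExchange.

Section Lifting.
Variables (W : Group) (S : W -> Prop).
Hypothesis HW : coxeter_system W S.
Local Notation len := (coxlen W S).
Local Notation bru := (bruhat W S).

Lemma gen_mulK s w : S s -> s ** (s ** w) = w.
Proof. intro Hs. apply invol_mulK, (gen_invol W S HW s Hs). Qed.

(* Multiplying on the left by a generator that increases the length goes
   up in the Bruhat order: s u = u (u^-1 s u). *)
Lemma bruhat_gen_up s u : S s -> len u < len (s ** u) -> bru u (s ** u).
Proof.
  intros Hs Hlt. apply rt_step. exists (ginv u ** s ** u). repeat split.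
  - rewrite <- (inv_inv W u) at 2. apply reflection_conj, gen_reflection, Hs.
  - rewrite !gmul_assoc, gmul_Vr, gmul_1l. reflexivity.
  - exact Hlt.
Qed.

Lemma bruhat_gen_up_r t u : S t -> len u < len (u ** t) -> bru u (u ** t).
Proof.
  intros Ht Hlt. apply rt_step. exists t. repeat split; [apply gen_reflection, Ht | exact Hlt].
Qed.

Lemma bruhat_gen_down s w : S s -> len (s ** w) < len w -> bru (s ** w) w.
Proof.
  intros Hs Hlt. rewrite <- (gen_mulK s w Hs) at 2.
  apply bruhat_gen_up; [exact Hs|]. rewrite gen_mulK; assumption.
Qed.

Lemma bruhat_step_translate u w s :
  bruhat_step W S u w -> S s -> s ** u = w \/ bruhat_step W S (s ** u) (s ** w).
Proof.
  intros [r [Hr [-> Hlt]]] Hs.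
  destruct (lt_dec (len (s ** u)) (len (s ** (u ** r)))) as [Hup|Hdown].
  { right. exists r. repeat split; [exact Hr | apply gmul_assoc | exact Hup]. }
  left. assert (Hne := len_mul_refl_r W S HW r (s ** u) Hr). rewrite <- gmul_assoc in Hne.
  assert (Hsw : len (s ** (u ** r)) < len (s ** u)) by lia. clear Hdown Hne.
  set (w := u ** r) in *.
  assert (Hu : (w ** r ** ginv w) ** w = u).
  { rewrite mulVK. unfold w. apply invol_mulKr, (reflection_invol W S HW r Hr). }
  clearbody w.
  destruct (reduced_word W S HW (s ** w)) as [l [Hl [Hp Hn]]].
  assert (Hw : wprod (s :: l) = w) by (simpl; rewrite Hp; apply gen_mulK, Hs).
  assert (Hshort : len ((w ** r ** ginv w) ** w) < len w) by (rewrite Hu; exact Hlt).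
  destruct (strong_exchange W S HW (w ** r ** ginv w) w (s :: l)
              (reflection_conj W S r w Hr) Hshort (Forall_cons _ Hs Hl) Hw)
    as [l1 [a [l2 [Hsplit Hdel]]]].
  rewrite Hu in Hdel.
  destruct l1 as [|b l1]; simpl in Hsplit; injection Hsplit as <- ->.
  - simpl in Hdel. rewrite Hdel, Hp. apply gen_mulK, Hs.
  - exfalso. simpl in Hdel. rewrite Hdel, gen_mulK in Hsw by exact Hs.
    apply Forall_app in Hl as [Hl1 Hl2].
    apply Forall_cons_iff in Hl2 as [_ Hl2].
    pose proof (len_wprod_le W S HW (l1 ++ l2) (proj2 (Forall_app _ _ _) (conj Hl1 Hl2))).
    rewrite !length_app in *. simpl in Hn. lia.
Qed.

Lemma lift_either s u w : S s -> bru u w -> bru (s ** u) w \/ bru (s ** u) (s ** w).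
Proof.
  intros Hs Hb. apply clos_rt_rt1n in Hb.
  induction Hb as [|u v w Huv Hvw IH]; [right; apply rt_refl|].
  destruct (bruhat_step_translate u v s Huv Hs) as [E|Hstep].
  - left. rewrite E. apply clos_rt1n_rt. assumption.
  - destruct IH as [I|I]; [left|right]; eapply rt_trans; eauto using rt_step.
Qed.

Lemma lift_descent s u w : S s -> len (s ** w) < len w -> bru u w -> bru (s ** u) w.
Proof.
  intros Hs Hlt Hb. destruct (lift_either s u w Hs Hb) as [I|I]; [exact I|].
  eapply rt_trans; [exact I | apply bruhat_gen_down; assumption].
Qed.

Lemma lifting s u x : S s -> bru u x -> len (s ** x) < len x ->
  (len (s ** u) < len u -> bru (s ** u) (s ** x)) /\
  (len u < len (s ** u) -> bru u (s ** x)).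
Proof.
  intros Hs Hb. apply clos_rt_rtn1 in Hb.
  induction Hb as [|y z Hyz Hrt IH]; intro Hz; [split; intro; [apply rt_refl | lia]|].
  assert (Huy : bru u y) by (apply clos_rtn1_rt; exact Hrt).
  assert (Hdesc_u : len (s ** u) < len u -> bru (s ** u) u)
    by (intro; apply bruhat_gen_down; assumption).
  destruct (bruhat_step_translate y z s Hyz Hs) as [E|Hstep].
  { rewrite <- E, gen_mulK by exact Hs. split; intro; [|exact Huy].
    eapply rt_trans; [apply Hdesc_u; assumption | exact Huy]. }
  apply rt_step in Hstep.
  destruct (lt_dec (len (s ** y)) (len y)) as [Hy|Hy].
  - destruct (IH Hy) as [I1 I2].
    split; intro; eapply rt_trans; [apply I1; assumption | exact Hstep
                                   | apply I2; assumption | exact Hstep].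
  - assert (Hne := len_mul_refl_l W S HW s y (gen_reflection W S s Hs)).
    assert (Huz : bru u (s ** z)).
    { eapply rt_trans; [exact Huy|]. eapply rt_trans; [|exact Hstep].
      apply bruhat_gen_up; [exact Hs | lia]. }
    split; intro; [|exact Huz]. eapply rt_trans; [apply Hdesc_u; assumption | exact Huz].
Qed.

Lemma bruhat_inv u v : bru u v -> bru (ginv u) (ginv v).
Proof.
  induction 1 as [u v [r [Hr [-> Hlt]]]| |]; [|apply rt_refl | eapply rt_trans; eauto].
  apply rt_step. exists (u ** r ** ginv u). repeat split.
  - apply reflection_conj, Hr.
  - rewrite inv_mul, (invol_inv W r (reflection_invol W S HW r Hr)), !gmul_assoc,
      gmul_Vl, gmul_1l.
    reflexivity.
  - rewrite !(len_inv W S HW). exact Hlt.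
Qed.

(* Right-handed version of [lift_descent], obtained through inversion. *)
Lemma lift_descent_r t u y : S t -> len (y ** t) < len y -> bru u y -> bru (u ** t) y.
Proof.
  intros Ht Hlt Hb.
  assert (Hti := gen_inv W S HW t Ht).
  assert (Hlt' : len (t ** ginv y) < len (ginv y))
    by (rewrite <- Hti, <- inv_mul, !(len_inv W S HW); exact Hlt).
  pose proof (bruhat_inv _ _ (lift_descent t _ _ Ht Hlt' (bruhat_inv _ _ Hb))) as H.
  rewrite inv_mul, Hti, !inv_inv in H. exact H.
Qed.

End Lifting.

Section Lemma3p3.
Variables (W : Group) (S : W -> Prop).
Hypothesis HW : coxeter_system W S.
Local Notation len := (coxlen W S).
Local Notation bru := (bruhat W S).

Definition lemma3p3_concl (s t x' y : W) : Prop :=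
  bru x' y \/ (bru (s ** x' ** t) y /\ len (s ** x' ** t) <= len x').

(* Case where s is a left descent of x: then s x = y t <= y and t is a right
   descent of y; lift x' <= x along s. *)
Lemma lemma3p3_left_descent s t x y x' : S s -> S t -> y = s ** x ** t ->
  len x = len y -> bru x' x -> len (s ** x) < len x -> lemma3p3_concl s t x' y.
Proof.
  intros Hs Ht -> Hl Hx' Hsx.
  assert (Hyt : s ** x ** t ** t = s ** x) by apply invol_mulKr, (gen_invol W S HW t Ht).
  assert (Hsxy : bru (s ** x) (s ** x ** t)) by (apply (bruhat_gen_up_r W S); [exact Ht | lia]).
  destruct (lifting W S HW s x' x Hs Hx' Hsx) as [Hdown Hup].
  destruct (lt_dec (len (s ** x')) (len x')) as [Hsx'|Hsx'].
  - right. split.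
    + apply (lift_descent_r W S HW); [exact Ht | rewrite Hyt; lia |].
      eapply rt_trans; [apply Hdown, Hsx' | exact Hsxy].
    + pose proof (len_mul_gen_r W S HW t (s ** x') Ht). lia.
  - left. assert (Hne := len_mul_refl_l W S HW s x' (gen_reflection W S s Hs)).
    eapply rt_trans; [apply Hup; lia | exact Hsxy].
Qed.

(* The statement is symmetric under inversion, which exchanges s and t. *)
Lemma lemma3p3_concl_inv s t x' y : S s -> S t ->
  lemma3p3_concl t s (ginv x') (ginv y) -> lemma3p3_concl s t x' y.
Proof.
  intros Hs Ht [H|[H Hlen]]; [left | right].
  - rewrite <- (inv_inv W x'), <- (inv_inv W y). apply (bruhat_inv W S HW), H.
  - assert (E : ginv (t ** ginv x' ** s) = s ** x' ** t)
      by (rewrite !inv_mul, (gen_inv W S HW s Hs), (gen_inv W S HW t Ht), inv_inv,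
            !gmul_assoc; reflexivity).
    apply (bruhat_inv W S HW) in H. rewrite E, inv_inv in H.
    split; [exact H|]. rewrite <- E, (len_inv W S HW), <- (len_inv W S HW x'). exact Hlen.
Qed.

(* Case where t is a right descent of x: apply the left-descent case to
   x^-1, y^-1 = t x^-1 s and x'^-1. *)
Lemma lemma3p3_right_descent s t x y x' : S s -> S t -> y = s ** x ** t ->
  len x = len y -> bru x' x -> len (x ** t) < len x -> lemma3p3_concl s t x' y.
Proof.
  intros Hs Ht Hy Hl Hx' Hxt. apply lemma3p3_concl_inv; [exact Hs | exact Ht |].
  apply (lemma3p3_left_descent t s (ginv x)); [exact Ht | exact Hs | | | |].
  - rewrite Hy, !inv_mul, (gen_inv W S HW s Hs), (gen_inv W S HW t Ht), !gmul_assoc.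
    reflexivity.
  - rewrite !(len_inv W S HW). exact Hl.
  - apply (bruhat_inv W S HW), Hx'.
  - rewrite <- (gen_inv W S HW t Ht), <- inv_mul, !(len_inv W S HW). exact Hxt.
Qed.

(* Case where s and t both lengthen x: then x <= x t and, lifting along s
   (a left descent of x t since s x t = y has the length of x), x <= y. *)
Lemma lemma3p3_no_descent s t x y : S s -> S t -> y = s ** x ** t ->
  len x = len y -> len x < len (s ** x) -> len x < len (x ** t) -> bru x y.
Proof.
  intros Hs Ht Hy Hl Hsx Hxt.
  assert (Ey : s ** (x ** t) = y) by (rewrite Hy, gmul_assoc; reflexivity).
  destruct (lifting W S HW s x (x ** t) Hs) as [_ Hup].
  - apply (bruhat_gen_up_r W S); assumption.
  - rewrite Ey. lia.
  - rewrite <- Ey. apply Hup, Hsx.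
Qed.

End Lemma3p3.

Theorem lemma3p3 (W : Group) (S : W -> Prop) (HW : coxeter_system W S)
  (x y s t : W) (Hs : S s) (Ht : S t)
  (Hy : y = gmul (gmul s x) t)
  (Hl : coxlen W S x = coxlen W S y)
  (x' : W) (Hx' : bruhat W S x' x) :
  bruhat W S x' y \/
  (bruhat W S (gmul (gmul s x') t) y /\
   coxlen W S (gmul (gmul s x') t) <= coxlen W S x').
Proof.
  change (lemma3p3_concl W S s t x' y).
  destruct (lt_dec (coxlen W S (s ** x)) (coxlen W S x)) as [Hsx|Hsx].
  { exact (lemma3p3_left_descent W S HW s t x y x' Hs Ht Hy Hl Hx' Hsx). }
  destruct (lt_dec (coxlen W S (x ** t)) (coxlen W S x)) as [Hxt|Hxt].
  { exact (lemma3p3_right_descent W S HW s t x y x' Hs Ht Hy Hl Hx' Hxt). }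
  (* Neither is a descent; lengths change under reflections, so both ascend. *)
  pose proof (len_mul_refl_l W S HW s x (gen_reflection W S s Hs)).
  pose proof (len_mul_refl_r W S HW t x (gen_reflection W S t Ht)).
  left. apply rt_trans with x; [exact Hx'|].
  apply (lemma3p3_no_descent W S HW s t); [assumption.. | lia | lia].
Qed.
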